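(* Let $G\subset GL(V)$ be a reflection group and fix $g\in G$. If $\ell(a)=\operatorname{codim}(a)$ for every codimension atom $a$ with $a\le_\perp g$, then $\ell(g)=\operatorname{codim}(g)$.
   Context: $V$ is a finite-dimensional vector space of dimension $n$ over $\mathbb{R}$ or $\mathbb{C}$. A reflection is an element of $GL(V)$ of finite order fixing a hyperplane pointwise; a reflection group is a finite subgroup of $GL(V)$ generated by reflections. $\ell(g)$ is the minimal number of reflections of $G$ whose product is $g$ ($\ell(1)=0$). $\operatorname{codim}(g)=n-\dim\{v\in V:gv=v\}$. The codimension order is the partial order on $G$ given by $a\le_\perp c$ iff $\operatorname{codim}(a)+\operatorname{codim}(a^{-1}c)=\operatorname{codim}(c)$. A codimension atom is an element covering the identity in this poset, i.e. $a\ne 1$ such that there is no $x$ with $1<_\perp x<_\perp a$. *)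

From HB Require Import structures.
From mathcomp Require Import all_boot all_order all_algebra.
From mathcomp Require Import complex.
From mathcomp Require Import reals.
Set Implicit Arguments. Unset Strict Implicit. Unset Printing Implicit Defensive.
Import Order.TTheory GRing.Theory Num.Theory.
Local Open Scope ring_scope.

Section Defs.
Variables (F : fieldType) (n : nat).
Implicit Types (g a c x : 'M[F]_n) (G : seq 'M[F]_n).

(* Matrices act on row vectors v (v *m g); fixed space of g as a row space. *)
Definition fixspace g : 'M[F]_n := kermx (g - 1%:M).

Definition codim g : nat := (n - \rank (fixspace g))%N.

Definition is_reflection g : Prop :=
  [/\ g \in unitmx, (exists k, (0 < k)%N /\ g ^+ k = 1%:M), g != 1%:M &
      exists H : 'M[F]_n, \rank H = n.-1 /\ (H <= fixspace g)%MS].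

Definition mxprod (s : seq 'M[F]_n) : 'M[F]_n := foldr mulmx 1%:M s.

Definition reflection_group G : Prop :=
  [/\ 1%:M \in G,
      (forall g, g \in G -> g \in unitmx),
      (forall g h, g \in G -> h \in G -> g *m h \in G),
      (forall g, g \in G -> invmx g \in G) &
      (forall g, g \in G -> exists s : seq 'M[F]_n,
          (forall r, r \in s -> r \in G /\ is_reflection r) /\ mxprod s = g)].

Definition refl_factorization G g (s : seq 'M[F]_n) : Prop :=
  (forall r, r \in s -> r \in G /\ is_reflection r) /\ mxprod s = g.

Definition is_refl_length G g (k : nat) : Prop :=
  (exists s, refl_factorization G g s /\ size s = k) /\
  (forall s, refl_factorization G g s -> (k <= size s)%N).

Definition codim_le a c : Prop := (codim a + codim (invmx a *m c))%N = codim c.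

Definition codim_lt a c : Prop := codim_le a c /\ a <> c.

Definition codim_atom G a : Prop :=
  a \in G /\ a <> 1%:M /\
  ~ (exists x, x \in G /\ codim_lt 1%:M x /\ codim_lt x a).

End Defs.

Definition main_claim (F : fieldType) : Prop :=
  forall (n : nat) (G : seq 'M[F]_n) (g : 'M[F]_n),
    reflection_group G -> g \in G ->
    (forall a, codim_atom G a -> codim_le a g -> is_refl_length G a (codim a)) ->
    is_refl_length G g (codim g).

From HB Require Import structures.
From mathcomp Require Import all_boot all_order all_algebra.
From mathcomp Require Import complex.
From mathcomp Require Import reals.
From Stdlib Require Import Classical.
Set Implicit Arguments. Unset Strict Implicit. Unset Printing Implicit Defensive.
Import Order.TTheory GRing.Theory Num.Theory.
Local Open Scope ring_scope.

(* Since codim (a b) <= codim a + codim b and reflections have codimension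
   one, l(g) >= codim g always.  For the converse, induct on codim x for the
   elements x <=_perp g: if x <> 1 there is an atom a <=_perp x (descend
   along <_perp, which strictly decreases codim), and a <=_perp g by
   transitivity, so a is a product of codim a reflections.  Its complement
   h = a^-1 x also satisfies h <=_perp x <=_perp g, with
   codim h = codim x - codim a < codim x, so h is a product of codim h
   reflections, and x = a h is a product of codim x reflections. *)

Section Codimension.
Variables (F : fieldType) (n : nat).
Implicit Types (r g a x y : 'M[F]_n) (G : seq 'M[F]_n).

Lemma codimE g : codim g = \rank (g - 1%:M).
Proof. by rewrite /codim /fixspace mxrank_ker subKn // rank_leq_row. Qed.

Lemma codim1 : codim (1%:M : 'M[F]_n) = 0%N.
Proof. by rewrite codimE subrr mxrank0. Qed.

Lemma codim_eq0 g : (codim g == 0%N) = (g == 1%:M).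
Proof. by rewrite codimE mxrank_eq0 subr_eq0. Qed.

Lemma codimM a g : (codim (a *m g) <= codim a + codim g)%N.
Proof.
rewrite !codimE.
have -> : a *m g - 1%:M = (a - 1%:M) *m g + (g - 1%:M).
  by rewrite mulmxBl mul1mx addrA subrK.
by apply: leq_trans (mxrank_add _ _) _; rewrite leq_add2r mxrankM_maxl.
Qed.

Lemma codim_conj a x : x \in unitmx -> codim (invmx x *m a *m x) = codim a.
Proof.
move=> ux; rewrite !codimE.
have -> : invmx x *m a *m x - 1%:M = invmx x *m (a - 1%:M) *m x.
  by rewrite mulmxBr mulmxBl mulmx1 mulVmx.
by rewrite mxrankMfree ?row_free_unit // eqmxMfull // row_full_unit unitmx_inv.
Qed.

Lemma codim_reflection r : is_reflection r -> (codim r <= 1)%N.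
Proof.
case=> _ _ _ [H [rankH /mxrankS]]; rewrite rankH /codim => le_H.
by apply: leq_trans (leq_sub2l _ le_H) _; rewrite leq_subLR addn1 leqSpred.
Qed.

Lemma mxprod_cat (s1 s2 : seq 'M[F]_n) :
  mxprod (s1 ++ s2) = mxprod s1 *m mxprod s2.
Proof. by elim: s1 => [|r s IHs] /=; rewrite ?mul1mx // IHs mulmxA. Qed.

Lemma codim_mxprod (s : seq 'M[F]_n) :
  (forall r, r \in s -> is_reflection r) -> (codim (mxprod s) <= size s)%N.
Proof.
elim: s => [|r s IHs] reflP /=; first by rewrite codim1.
apply: leq_trans (codimM _ _) _; rewrite -add1n leq_add //.
  by apply/codim_reflection/reflP; rewrite mem_head.
by apply: IHs => r' r's; apply: reflP; rewrite inE r's orbT.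
Qed.

Lemma codim_refl_factorization G g s :
  refl_factorization G g s -> (codim g <= size s)%N.
Proof. by case=> reflP <-; apply: codim_mxprod => r /reflP []. Qed.

Lemma invmxM a x : a \in unitmx -> x \in unitmx ->
  invmx (a *m x) = invmx x *m invmx a.
Proof.
move=> ua ux.
have uax : a *m x \in unitmx by rewrite unitmx_mul ua.
rewrite -[LHS]mulmx1 -(mulmxV ua) -{2}[a]mulmx1 -(mulmxV ux) !mulmxA.
by rewrite -(mulmxA _ a) mulVmx // mul1mx.
Qed.

Lemma codim_lexx x : x \in unitmx -> codim_le x x.
Proof. by move=> ux; rewrite /codim_le mulVmx // codim1 addn0. Qed.

Lemma codim_le_trans a y x : a \in unitmx -> y \in unitmx ->
  codim_le a y -> codim_le y x -> codim_le a x.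
Proof.
rewrite /codim_le => ua uy le_ay le_yx; apply/eqP; rewrite eqn_leq.
apply/andP; split.
  have -> : invmx a *m x = (invmx a *m y) *m (invmx y *m x).
    by rewrite mulmxA mulmxK.
  by rewrite -le_yx -le_ay -addnA leq_add2l codimM.
by have := codimM a (invmx a *m x); rewrite mulKVmx.
Qed.

Lemma codim_le_complement a x : a \in unitmx -> x \in unitmx ->
  codim_le a x -> codim_le (invmx a *m x) x.
Proof.
rewrite /codim_le => ua ux le_ax.
by rewrite invmxM ?unitmx_inv // invmxK codim_conj // addnC.
Qed.

Lemma codim_lt_codim a x : a \in unitmx ->
  codim_le a x -> a <> x -> (codim a < codim x)%N.
Proof.
move=> ua <- neq_ax; rewrite -[X in (X < _)%N]addn0 ltn_add2l lt0n codim_eq0.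
by apply/eqP => h; apply: neq_ax; rewrite -[x](mulKVmx ua) h mulmx1.
Qed.

Lemma exists_codim_atom G x : {subset G <= unitmx} ->
  x \in G -> x != 1%:M -> exists a, codim_atom G a /\ codim_le a x.
Proof.
move=> unitG; have [k] := ubnP (codim x); elim: k x => // k IHk x lt_xk xG x1.
have [atom_x | not_atom_x] := classic (codim_atom G x).
  by exists x; split; last exact/codim_lexx/unitG.
have [y [yG [[_ y1] [le_yx neq_yx]]]] :
    exists y, y \in G /\ codim_lt 1%:M y /\ codim_lt y x.
  by apply: NNPP => no_y; apply: not_atom_x; split; [|split; [apply/eqP|]].
have lt_yx := codim_lt_codim (unitG _ yG) le_yx neq_yx.
have [|a [atom_a le_ay]] := IHk y (leq_trans lt_yx lt_xk) yG.
  by apply/eqP; exact: nesym.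
exists a; split=> //; apply: codim_le_trans le_ay le_yx; last exact: unitG.
by case: atom_a => /unitG.
Qed.

Lemma refl_factorization_below G g :
  {subset G <= unitmx} ->
  (forall x y, x \in G -> y \in G -> x *m y \in G) ->
  (forall x, x \in G -> invmx x \in G) ->
  (forall a, codim_atom G a -> codim_le a g -> is_refl_length G a (codim a)) ->
  forall x, x \in G -> codim_le x g ->
  exists2 s, refl_factorization G x s & size s = codim x.
Proof.
move=> unitG mulG invG atomP x; have [k] := ubnP (codim x).
elim: k x => // k IHk x lt_xk xG le_xg.
have [->|x1] := eqVneq x 1%:M; first by exists [::]; rewrite ?codim1.
have [a [atom_a le_ax]] := exists_codim_atom unitG xG x1.
have [aG [a1 _]] := atom_a.
have [ua ux] := (unitG _ aG, unitG _ xG).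
have [[s1 [[s1G prod_s1] size_s1]] _] := atomP a atom_a (codim_le_trans ua ux le_ax le_xg).
set h := invmx a *m x.
have hG : h \in G by rewrite /h mulG ?invG.
have le_hx : codim_le h x by apply: codim_le_complement.
have lt_hx : (codim h < codim x)%N.
  by rewrite -le_ax -{1}[codim h]add0n ltn_add2r lt0n codim_eq0; apply/eqP.
have [s2 fact_s2 size_s2] :=
  IHk h (leq_trans lt_hx lt_xk) hG (codim_le_trans (unitG _ hG) ux le_hx le_xg).
exists (s1 ++ s2); last by rewrite size_cat size_s1 size_s2.
case: fact_s2 => s2G prod_s2; split.
  by move=> r; rewrite mem_cat => /orP [/s1G | /s2G].
by rewrite mxprod_cat prod_s1 prod_s2 /h mulKVmx.
Qed.

Lemma refl_length_codim G g : reflection_group G -> g \in G ->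
  (forall a, codim_atom G a -> codim_le a g -> is_refl_length G a (codim a)) ->
  is_refl_length G g (codim g).
Proof.
case=> _ unitG mulG invG _ gG atomP; split; last first.
  by move=> s; apply: codim_refl_factorization.
have [s fact_s size_s] :=
  refl_factorization_below unitG mulG invG atomP gG (codim_lexx (unitG _ gG)).
exists s; split; [exact: fact_s | exact: size_s].
Qed.

End Codimension.

Theorem mainTheorem2 (R : realType) : main_claim R /\ main_claim R[i].
Proof. by split=> n G g; apply: refl_length_codim. Qed.
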